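(* Let $m,n,s,c$ be positive integers such that $2\leq s\leq n$ and $ms=2n$. A magic rectangle set $\mathrm{MRS}(m,n;s,2;c)$ exists if and only if $s\geq 4$ is even.
   Context: A partially filled array is an array in which some cells may be empty. A magic rectangle set with empty cells $\mathrm{MRS}(m,n;s,k;c)$ is a set of $c$ partially filled $m\times n$ arrays with integer entries such that each integer of $\{1,2,\ldots,nkc\}$ appears exactly once, in exactly one of the arrays (and no other entries occur); in every array each row contains exactly $s$ filled cells and each column exactly $k$ filled cells; and there exist integers $x,y$ such that in every array each row sums to $x$ and each column sums to $y$. *)

From mathcomp Require Import all_boot all_order.
Unset Printing Implicit Defensive.

(* A family of c partially filled m x n arrays: A t i j = None means the cell
   (i,j) of array t is empty, Some v means it holds the integer v.
   Since all entries are required to lie in {1,...,n*k*c}, natural numbers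
   suffice for the entries. *)
Definition is_MRS (m n s k c : nat) (A : 'I_c -> 'I_m -> 'I_n -> option nat) : Prop :=
  (forall t i j v, A t i j = Some v -> 1 <= v <= n * k * c) /\
  (forall v, 1 <= v <= n * k * c ->
     #|[set p : 'I_c * 'I_m * 'I_n | A p.1.1 p.1.2 p.2 == Some v]| = 1) /\
  (forall t i, #|[set j : 'I_n | A t i j != None]| = s) /\
  (forall t j, #|[set i : 'I_m | A t i j != None]| = k) /\
  (exists x y : nat,
     (forall t i, \sum_(j < n) odflt 0 (A t i j) = x) /\
     (forall t j, \sum_(i < m) odflt 0 (A t i j) = y)).

Definition MRS (m n s k c : nat) : Prop :=
  exists A : 'I_c -> 'I_m -> 'I_n -> option nat, is_MRS m n s k c A.

From mathcomp Require Import all_boot all_order.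
From mathcomp Require Import zify.
Set Implicit Arguments. Unset Strict Implicit. Unset Printing Implicit Defensive.

(* Necessity: counting all entries by rows, by columns and as 1 + ... + 2nc
   forces the column sum 2nc + 1 and the row sum s (2nc + 1) / 2, so s is even;
   for s = 2 row and column sums coincide, and the two neighbours of the cell
   holding 1 force a second 1.
   Sufficiency: write s = 2t and n = mt, cut the columns into m blocks of t
   consecutive columns and fill block b in rows b and pi b, for a fixed-point-free
   permutation pi of the rows, with v in row b and 2P + 1 - v in row pi b
   (P = mtc).  Columns then sum to 2P + 1 and each row meets exactly two blocks.
   Every cell carries a label L < P and the value P + 1 + L or P - L, so a
   bijective labelling uses every number once, and rows are magic as soon as
   the block sums satisfy S (pi b) = S b.  Two adjacent columns with consecutive
   labels, one in each half, contribute 2P, which settles t even; for t odd the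
   first three columns of each block are balanced by three permutations of the
   blocks with constant sum (m odd) or by a table of label triples with equal
   sums (m even). *)

Lemma sum_ord_supp2 k (f : 'I_k -> nat) (a b : 'I_k) : a != b ->
  (forall i, i != a -> i != b -> f i = 0) -> \sum_i f i = f a + f b.
Proof.
move=> ab f0; rewrite (bigD1 a) //= (bigD1 b) 1?eq_sym //=.
by rewrite big1 ?addn0 // => i /andP[]; exact: f0.
Qed.

Lemma sum_nat_blocks m t (F : nat -> nat) :
  \sum_(j < m * t) F j = \sum_(b < m) \sum_(l < t) F (b * t + l).
Proof.
elim: m => [|m IH]; first by rewrite !big_ord0.
rewrite big_ord_recr /= -IH -!(big_mkord xpredT) mulSnr.
rewrite (big_cat_nat (leq0n (m * t)) (leq_addr t (m * t))) /=; congr (_ + _).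
rewrite -{1}(add0n (m * t)) big_addn addKn big_mkord.
by apply: eq_bigr => l _; rewrite addnC.
Qed.

Lemma sum_ord_pairs n (f : nat -> nat) K : ~~ odd n ->
  (forall q, q < n./2 -> f (2 * q) + f (2 * q).+1 = K) -> \sum_(l < n) f l = n./2 * K.
Proof.
move=> n_even; have [u ->] : exists u, n = u.*2.
  by exists n./2; rewrite -[n in LHS]odd_double_half (negbTE n_even).
rewrite doubleK; elim: u => [|u IH] pairK; first by rewrite big_ord0.
rewrite doubleS !big_ord_recr /= IH => [|q q_lt]; last by apply: pairK; lia.
by rewrite -addnA -mul2n pairK // mulSn addnC.
Qed.

Lemma sum_ord_split3 t (f : nat -> nat) : 3 <= t ->
  \sum_(l < t) f l = \sum_(l < 3) f l + \sum_(l < t - 3) f (3 + l).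
Proof.
move=> t3; have [w ->] : exists w, t = 3 + w by exists (t - 3); lia.
by rewrite big_split_ord addKn.
Qed.

Lemma ltn_block m t b l : b < m -> l < t -> b * t + l < m * t.
Proof.
move=> b_lt l_lt; apply: leq_trans (leq_mul b_lt (leqnn t)).
by rewrite mulSn addnC ltn_add2r.
Qed.

Lemma divn_block b t l : l < t -> (b * t + l) %/ t = b.
Proof. by move=> l_lt; rewrite divnMDl ?divn_small ?addn0 //; case: t l_lt. Qed.

Lemma modn_block b t l : l < t -> (b * t + l) %% t = l.
Proof. by move=> l_lt; rewrite modnMDl modn_small. Qed.

Lemma block_lt m t j : j < m * t -> j %/ t < m.
Proof. by case: t => [|t]; rewrite ?muln0 // ltn_divLR. Qed.

Lemma block_index_inj t b1 b2 l1 l2 : l1 < t -> l2 < t ->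
  b1 * t + l1 = b2 * t + l2 -> b1 = b2 /\ l1 = l2.
Proof.
move=> lt1 lt2 e; split.
  by rewrite -(divn_block b1 lt1) -(divn_block b2 lt2) e.
by rewrite -(modn_block b1 lt1) -(modn_block b2 lt2) e.
Qed.

(** * Necessity *)

Lemma sum_ord_id_mul2 N : (\sum_(v < N.+1) v) * 2 = N * N.+1.
Proof.
elim: N => [|N IH]; first by rewrite big_ord_recr big_ord0.
by rewrite big_ord_recr /= mulnDl IH; lia.
Qed.

Lemma two_filled_partner k (f : 'I_k -> option nat) a u :
  #|[set i | f i != None]| = 2 -> f a = Some u ->
  exists2 b, b != a & exists w, f b = Some w /\ \sum_i odflt 0 (f i) = u + w.
Proof.
set S := [set i | f i != None] => S2 fa.
have /cards1P[b Sb] : #|S :\ a| == 1.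
  by move: S2; rewrite (cardsD1 a) inE fa /= add1n => -[->].
have : b \in S :\ a by rewrite Sb set11.
rewrite !inE => /andP[ba]; case fb: (f b) => [w|] // _.
exists b => //; exists w; split=> //.
rewrite (@sum_ord_supp2 _ _ a b) 1?eq_sym ?fa ?fb // => i ia ib.
case fi: (f i) => [v|] //.
have : i \in S :\ a by rewrite !inE ia fi.
by rewrite Sb inE (negbTE ib).
Qed.

Section ArrayTotal.
Variables (m n c : nat) (A : 'I_c -> 'I_m -> 'I_n -> option nat).

Definition array_total := \sum_(p : 'I_c * 'I_m * 'I_n) odflt 0 (A p.1.1 p.1.2 p.2).

Lemma array_total_values N :
  (forall t i j v, A t i j = Some v -> 1 <= v <= N) ->
  (forall v, 1 <= v <= N ->
     #|[set p : 'I_c * 'I_m * 'I_n | A p.1.1 p.1.2 p.2 == Some v]| = 1) ->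
  array_total = \sum_(v < N.+1) v.
Proof.
move=> range once.
rewrite /array_total (eq_bigr (fun p => \sum_(v < N.+1)
  (if A p.1.1 p.1.2 p.2 == Some (val v) then val v else 0))); last first.
  move=> p _; case E: (A _ _ _) => [w|] /=; last by rewrite big1.
  have /andP[_ wN] := range _ _ _ _ E.
  rewrite (bigD1 (Ordinal (wN : w < N.+1))) //= eqxx big1 ?addn0 // => v vw.
  by case: eqP => // -[wv]; move: vw; rewrite -val_eqE /= wv eqxx.
rewrite exchange_big /=; apply: eq_bigr => v _.
rewrite -big_mkcond /= sum_nat_cond_const.
case: (posnP v) => [->|v0]; first by rewrite muln0.
by rewrite once ?mul1n // v0 -ltnS ltn_ord.
Qed.

Lemma array_total_rows x :
  (forall t i, \sum_(j < n) odflt 0 (A t i j) = x) -> array_total = c * (m * x).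
Proof.
move=> row; rewrite /array_total -(pair_bigA _ (fun ti j => odflt 0 (A ti.1 ti.2 j))).
rewrite -(pair_bigA _ (fun t i => \sum_j odflt 0 (A t i j))) /=.
under eq_bigr => t _ do under eq_bigr => i _ do rewrite row.
by rewrite !sum_nat_const !card_ord.
Qed.

Lemma array_total_cols y :
  (forall t j, \sum_(i < m) odflt 0 (A t i j) = y) -> array_total = c * (n * y).
Proof.
move=> col; rewrite /array_total -(pair_bigA _ (fun ti j => odflt 0 (A ti.1 ti.2 j))).
rewrite -(pair_bigA _ (fun t i => \sum_j odflt 0 (A t i j))) /=.
under eq_bigr => t _ do rewrite exchange_big /=.
under eq_bigr => t _ do under eq_bigr => j _ do rewrite col.
by rewrite !sum_nat_const !card_ord.
Qed.

End ArrayTotal.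

Lemma MRS_k2_necessary m n s c :
  0 < n -> 0 < c -> m * s = 2 * n -> MRS m n s 2 c -> 4 <= s /\ ~~ odd s.
Proof.
move=> n0 c0 ems [A [range [once [row_card [col_card [x [y [row col]]]]]]]].
set N := n * 2 * c; have N_gt0 : 0 < N by rewrite !muln_gt0 n0 c0.
have totV := array_total_values range once.
have totR := array_total_rows row; have totC := array_total_cols col.
have ey : y = N.+1.
  have tot2 : c * (n * y) * 2 = N * N.+1 by rewrite -totC totV sum_ord_id_mul2.
  by apply/eqP; rewrite -(eqn_pmul2l N_gt0) -tot2 /N; apply/eqP; lia.
have emx : m * x = n * y by apply/eqP; rewrite -(eqn_pmul2l c0) -totR -totC.
have e2x : 2 * x = s * y.
  apply/eqP; rewrite -(eqn_pmul2l n0); apply/eqP.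
  by rewrite mulnA [n * 2]mulnC -ems mulnAC emx mulnAC -mulnA.
have s_even : ~~ odd s.
  by apply/negP => os; move/(congr1 odd): e2x; rewrite ey !oddM /= os /N !oddM andbF.
split=> //; rewrite leqNgt; apply/negP => s_lt4.
have {s_even s_lt4} s2 : s = 2 by lia.
subst s; have emn : m = n by lia.
have exy : x = y by subst m; apply/eqP; rewrite -(eqn_pmul2l n0) emx.
have one_once := once 1 (_ : 1 <= 1 <= N).
have /card_gt0P[[[t i] j]] : 0 < #|[set p : 'I_c * 'I_m * 'I_n | A p.1.1 p.1.2 p.2 == Some 1]|.
  by rewrite one_once.
rewrite inE /= => /eqP A1.
have [j' j'j [w [Aw row_w]]] := two_filled_partner (row_card t i) A1.
have [i' _ [w' [Aw' col_w]]] := two_filled_partner (col_card t j') Aw.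
have w'1 : w' = 1 by move: row_w col_w; rewrite row col exy; lia.
have : 1 < #|[set p : 'I_c * 'I_m * 'I_n | A p.1.1 p.1.2 p.2 == Some 1]|.
  apply/card_gt1P; exists (t, i, j), (t, i', j').
  by rewrite !inE /= A1 Aw' w'1 !xpair_eqE negb_and (eq_sym j) j'j !orbT.
by rewrite one_once.
Qed.

(** * Arrays built from paired column blocks *)

Section PairedArray.

Variables (m t c : nat) (pi : nat -> nat) (label : nat -> nat -> nat) (upper : nat -> nat -> bool).

Local Notation P := (m * t * c).

Definition paired_value tau j := if upper tau j then P.+1 + label tau j else P - label tau j.

Definition paired_entry tau i j : option nat :=
  if i == j %/ t then Some (paired_value tau j)
  else if i == pi (j %/ t) then Some ((2 * P).+1 - paired_value tau j)
  else None.

Definition paired_array (tau : 'I_c) (i : 'I_m) (j : 'I_(m * t)) := paired_entry tau i j.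

Definition block_sum tau b := \sum_(l < t) paired_value tau (b * t + l).

Definition label_of v := if P < v then v - P.+1 else P - v.

Definition row_of tau j v := if upper tau j == (P < v) then j %/ t else pi (j %/ t).

Lemma sum_paired_value_run tau j0 n : ~~ odd n ->
  (forall l, l < n -> upper tau (j0 + l) = ~~ odd l) ->
  (forall l, l.+1 < n -> label tau (j0 + l.+1) = (label tau (j0 + l)).+1) ->
  (forall l, l < n -> label tau (j0 + l) < P) ->
  \sum_(l < n) paired_value tau (j0 + l) = n./2 * (2 * P).
Proof.
move=> n_even upperE labelS label_lt.
apply: (@sum_ord_pairs n (fun l => paired_value tau (j0 + l))) => // q q_lt.
have q1_lt : (2 * q).+1 < n by move: n_even; lia.
have q0_lt : 2 * q < n by apply: ltnW.
have := label_lt _ q1_lt; rewrite /paired_value !upperE // labelS // oddS oddM /=; lia.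
Qed.

Variable rho : nat -> nat.

Hypothesis t_gt0 : 0 < t.
Hypothesis pi_lt : forall b, b < m -> pi b < m.
Hypothesis pi_neq : forall b, b < m -> pi b != b.
Hypothesis rho_lt : forall i, i < m -> rho i < m.
Hypothesis rhoK : forall i, i < m -> pi (rho i) = i.
Hypothesis piK : forall b, b < m -> rho (pi b) = b.
Hypothesis label_lt : forall tau j, tau < c -> j < m * t -> label tau j < P.
Hypothesis label_inj : forall tau1 tau2 j1 j2, tau1 < c -> tau2 < c -> j1 < m * t -> j2 < m * t ->
  label tau1 j1 = label tau2 j2 -> tau1 = tau2 /\ j1 = j2.
Hypothesis block_sum_pi : forall tau b, tau < c -> b < m -> block_sum tau (pi b) = block_sum tau b.

Lemma paired_value_range (tau : 'I_c) (j : 'I_(m * t)) : 0 < paired_value tau j <= 2 * P.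
Proof.
have := label_lt (ltn_ord tau) (ltn_ord j).
by rewrite /paired_value; case: upper; lia.
Qed.

Lemma paired_entry_block tau i b l : l < t ->
  paired_entry tau i (b * t + l) =
  if i == b then Some (paired_value tau (b * t + l))
  else if i == pi b then Some ((2 * P).+1 - paired_value tau (b * t + l))
  else None.
Proof. by move=> l_lt; rewrite /paired_entry divn_block. Qed.

Lemma paired_array_range tau i j v :
  paired_array tau i j = Some v -> 1 <= v <= m * t * 2 * c.
Proof.
have := paired_value_range tau j; rewrite /paired_array /paired_entry.
by case: ifP => _; [|case: ifP => // _] => + [<-]; lia.
Qed.

Lemma paired_arrayE tau i j v : 1 <= v <= 2 * P ->
  (paired_array tau i j == Some v) =
  (label tau j == label_of v) && (i == row_of tau j v :> nat).
Proof.
move=> v_range; have := label_lt (ltn_ord tau) (ltn_ord j).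
have := pi_neq (block_lt (ltn_ord j)).
rewrite /paired_array /paired_entry /paired_value /label_of /row_of.
move: (nat_of_ord i) (j %/ t) (pi _) (label _ _) (upper _ _) => i' b b' L up.
move=> /negbTE b'_b L_lt; have b_b' : (b == b') = false by rewrite eq_sym.
case: (eqVneq i' b) => [->|i'_b]; last case: (eqVneq i' b') => [->|i'_b'].
all: case: up; case: (ltnP P v) => v_big.
all: rewrite /= ?eqxx ?b_b' ?b'_b ?(negbTE i'_b) ?(negbTE i'_b') ?(inj_eq Some_inj).
all: rewrite ?andbT ?andbF //.
all: first [apply/eqP/eqP; lia | apply/eqP; lia].
Qed.

Lemma paired_array_once v : 1 <= v <= m * t * 2 * c ->
  #|[set p : 'I_c * 'I_m * 'I_(m * t) | paired_array p.1.1 p.1.2 p.2 == Some v]| = 1.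
Proof.
move=> v_range; have {}v_range : 1 <= v <= 2 * P by lia.
have Lv_lt : label_of v < P by rewrite /label_of; case: ifP; lia.
pose F (p : 'I_c * 'I_(m * t)) : 'I_P := Ordinal (label_lt (ltn_ord p.1) (ltn_ord p.2)).
have F_inj : injective F.
  move=> [tau1 j1] [tau2 j2] /(congr1 val) /=.
  by case/(label_inj (ltn_ord _) (ltn_ord _) (ltn_ord _) (ltn_ord _)) => /val_inj-> /val_inj->.
have F_card : #|'I_P| <= #|{: 'I_c * 'I_(m * t)}| by rewrite card_prod !card_ord mulnC.
have /codomP[[tau0 j0] /(congr1 val) /= L0] := inj_card_onto F_inj F_card (Ordinal Lv_lt).
have row_lt : row_of tau0 j0 v < m.
  by rewrite /row_of; case: ifP => _; [exact: block_lt | exact/pi_lt/block_lt].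
apply/eqP/cards1P; exists (tau0, Ordinal row_lt, j0); apply/setP => -[[tau i] j].
rewrite !inE paired_arrayE //= !xpair_eqE -!val_eqE /=.
apply/andP/andP => [[/eqP L_eq /eqP i_eq] | [/andP[/eqP e1 /eqP e2] /eqP e3]]; last first.
  by move: e1 e3 => /val_inj -> /val_inj ->; rewrite L0 e2 !eqxx.
rewrite L0 in L_eq.
have [e1 e3] := label_inj (ltn_ord _) (ltn_ord _) (ltn_ord _) (ltn_ord _) L_eq.
by rewrite e1 e3 i_eq -(val_inj e1) -(val_inj e3) !eqxx.
Qed.

Lemma sum_paired_row (G : option nat -> nat) tau i : G None = 0 -> i < m ->
  \sum_(j < m * t) G (paired_entry tau i j) =
  \sum_(l < t) G (Some (paired_value tau (i * t + l))) +
  \sum_(l < t) G (Some ((2 * P).+1 - paired_value tau (rho i * t + l))).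
Proof.
move=> G0 i_lt; have rho_i_lt := rho_lt i_lt.
have i_rho : (i == rho i) = false.
  by apply/negbTE; have := pi_neq rho_i_lt; rewrite rhoK // eq_sym.
rewrite (sum_nat_blocks m t (fun j => G (paired_entry tau i j))).
rewrite (@sum_ord_supp2 _ _ (Ordinal i_lt) (Ordinal rho_i_lt)) ?(negbT i_rho) //=.
  by congr (_ + _); apply: eq_bigr => l _; rewrite paired_entry_block ?eqxx ?i_rho ?rhoK ?eqxx.
move=> b; rewrite -!val_eqE /= => b_i b_rho; apply: big1 => l _.
rewrite paired_entry_block // eq_sym (negbTE b_i); case: eqP => // i_pi.
by move: b_rho; rewrite i_pi piK ?eqxx.
Qed.

Lemma sum_paired_col (G : option nat -> nat) tau j : G None = 0 -> j < m * t ->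
  \sum_(i < m) G (paired_entry tau i j) =
  G (Some (paired_value tau j)) + G (Some ((2 * P).+1 - paired_value tau j)).
Proof.
move=> G0 j_lt; have b_lt := block_lt j_lt; have pb_lt := pi_lt b_lt.
have pb_b : (pi (j %/ t) == j %/ t) = false by apply/negbTE/pi_neq.
rewrite (@sum_ord_supp2 _ _ (Ordinal b_lt) (Ordinal pb_lt)) -?val_eqE /= 1?eq_sym ?pb_b //.
  by rewrite /paired_entry eqxx pb_b eqxx.
by move=> i; rewrite -!val_eqE /= /paired_entry => /negbTE-> /negbTE->.
Qed.

Lemma paired_row_sum (tau : 'I_c) (i : 'I_m) :
  \sum_(j < m * t) odflt 0 (paired_array tau i j) = t * (2 * P).+1.
Proof.
rewrite (sum_paired_row (G := odflt 0)) //=.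
rewrite -[\sum_(l < t) paired_value _ _]/(block_sum tau i) -{1}(rhoK (ltn_ord i)).
rewrite block_sum_pi ?rho_lt // -big_split /=.
have -> : t * (2 * P).+1 = \sum_(l < t) (2 * P).+1 by rewrite sum_nat_const card_ord.
apply: eq_bigr => l _; apply: subnKC.
have j_lt := ltn_block (rho_lt (ltn_ord i)) (ltn_ord l).
by have /andP[_ /leqW] := paired_value_range tau (Ordinal j_lt).
Qed.

Lemma paired_col_sum (tau : 'I_c) (j : 'I_(m * t)) :
  \sum_(i < m) odflt 0 (paired_array tau i j) = (2 * P).+1.
Proof.
rewrite (sum_paired_col (G := odflt 0)) //=.
by have /andP[_] := paired_value_range tau j; lia.
Qed.

Lemma paired_array_MRS : MRS m (m * t) t.*2 2 c.
Proof.
exists paired_array; split; first exact: paired_array_range.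
split; first exact: paired_array_once.
split.
  move=> tau i; rewrite -sum1dep_card big_mkcond /=.
  rewrite (sum_paired_row (G := fun o => if o != None then 1 else 0)) //=.
  by rewrite !sum_nat_const !card_ord !muln1 addnn.
split.
  move=> tau j; rewrite -sum1dep_card big_mkcond /=.
  by rewrite (sum_paired_col (G := fun o => if o != None then 1 else 0)).
by exists (t * (2 * P).+1), (2 * P).+1; split; [exact: paired_row_sum | exact: paired_col_sum].
Qed.

End PairedArray.

(** * Blocks of even width *)

Definition offset_label m t (phi : nat -> nat) tau j := tau * (m * t) + phi j.

Lemma offset_label_lt m t c phi tau j : (forall j, j < m * t -> phi j < m * t) ->
  tau < c -> j < m * t -> offset_label m t phi tau j < m * t * c.
Proof.
by move=> phi_lt tau_lt /phi_lt; rewrite /offset_label [_ * c]mulnC; apply: ltn_block.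
Qed.

Lemma offset_label_inj m t phi tau1 tau2 j1 j2 :
  (forall j, j < m * t -> phi j < m * t) ->
  (forall j1 j2, j1 < m * t -> j2 < m * t -> phi j1 = phi j2 -> j1 = j2) ->
  j1 < m * t -> j2 < m * t ->
  offset_label m t phi tau1 j1 = offset_label m t phi tau2 j2 -> tau1 = tau2 /\ j1 = j2.
Proof.
move=> phi_lt phi_inj lt1 lt2 /(block_index_inj (phi_lt _ lt1) (phi_lt _ lt2))[-> e].
by split=> //; apply: phi_inj.
Qed.

Definition cyc_succ m b := if b.+1 < m then b.+1 else 0.
Definition cyc_pred m i := if 0 < i then i.-1 else m.-1.

Lemma cyc_succ_perm m : 2 <= m ->
  [/\ forall b, b < m -> cyc_succ m b < m, forall b, b < m -> cyc_succ m b != b,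
      forall i, i < m -> cyc_pred m i < m, forall i, i < m -> cyc_succ m (cyc_pred m i) = i
    & forall b, b < m -> cyc_pred m (cyc_succ m b) = b].
Proof.
rewrite /cyc_succ /cyc_pred => m2; split=> b b_lt.
- by case: ifP; lia.
- by apply/eqP; case: ifP; lia.
- by case: ifP; lia.
- by case: (posnP b) => b0 /=; case: ifP; lia.
- by case: (ltnP b.+1 m) => /= lt; lia.
Qed.

Lemma MRS_even_t m t c : 2 <= m -> 0 < t -> ~~ odd t -> MRS m (m * t) t.*2 2 c.
Proof.
move=> m2 t_gt0 t_even; have [succ_lt succ_neq pred_lt predK succK] := cyc_succ_perm m2.
pose upper (tau j : nat) := ~~ odd (j %% t).
have block_sumE tau b : tau < c -> b < m ->
    block_sum m t c (offset_label m t id) upper tau b = t./2 * (2 * (m * t * c)).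
  move=> tau_lt b_lt; apply: sum_paired_value_run => // l l_lt.
  - by rewrite /upper modn_block.
  - by rewrite /offset_label /= !addnS.
  - by apply: offset_label_lt => //; apply: ltn_block.
apply: (@paired_array_MRS m t c (cyc_succ m) (offset_label m t id) upper (cyc_pred m)) => //.
- by move=> tau j; apply: offset_label_lt.
- by move=> tau1 tau2 j1 j2 _ _; apply: offset_label_inj.
- by move=> tau b tau_lt b_lt; rewrite !block_sumE ?succ_lt.
Qed.

(** * Blocks of odd width, odd number of rows *)

(* For odd m, b, half_shift m b and comp_shift m b are three permutations of
   [0, m) with constant sum 3 (m - 1) / 2.  Using them to scatter the labels of
   the first three columns of every block gives these columns the same total in
   each block. *)
Definition half_shift m b := if b + m./2 < m then b + m./2 else b + m./2 - m.
Definition comp_shift m b := 3 * m./2 - b - half_shift m b.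
Definition triple_shift m l b :=
  if l == 0 then b else if l == 1 then half_shift m b else comp_shift m b.

Section OddShifts.
Variable m : nat.
Hypothesis m_odd : odd m.

Lemma add_shifts b : b < m -> b + half_shift m b + comp_shift m b = 3 * m./2.
Proof. by rewrite /comp_shift /half_shift; case: ifP; lia. Qed.

Lemma triple_shift_lt l b : b < m -> triple_shift m l b < m.
Proof.
by rewrite /triple_shift /comp_shift /half_shift; case: ifP => _ //; case: ifP => _; case: ifP; lia.
Qed.

Lemma triple_shift_inj l b1 b2 : b1 < m -> b2 < m ->
  triple_shift m l b1 = triple_shift m l b2 -> b1 = b2.
Proof.
rewrite /triple_shift /comp_shift /half_shift; case: ifP => _ //.
by case: ifP => _; case: ifP; case: ifP; lia.
Qed.

End OddShifts.

Definition triple_spread m t j :=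
  if j %% t < 3 then triple_shift m (j %% t) (j %/ t) * t + j %% t else j.

Definition spread_upper t (tau j : nat) := (j %% t < 3) || odd (j %% t).

Section TripleSpread.
Variables m t c : nat.
Hypotheses (m_odd : odd m) (t3 : 3 <= t) (t_odd : odd t).

Let t_gt0 : 0 < t := leq_trans (ltn0Sn 2) t3.

Local Notation label := (offset_label m t (triple_spread m t)).

Lemma triple_spread_lt j : j < m * t -> triple_spread m t j < m * t.
Proof.
move=> j_lt; rewrite /triple_spread; case: ifP => // _.
by apply: ltn_block; [apply: triple_shift_lt => //; apply: block_lt | rewrite ltn_mod].
Qed.

Lemma triple_spread_mod j : triple_spread m t j %% t = j %% t.
Proof. by rewrite /triple_spread; case: ifP => // _; rewrite modnMDl modn_mod. Qed.

Lemma triple_spread_tail j : 3 <= j %% t -> triple_spread m t j = j.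
Proof. by rewrite /triple_spread => l_ge; rewrite ltnNge l_ge. Qed.

Lemma triple_spread_inj j1 j2 : j1 < m * t -> j2 < m * t ->
  triple_spread m t j1 = triple_spread m t j2 -> j1 = j2.
Proof.
move=> lt1 lt2 e; have e_mod : j1 %% t = j2 %% t by rewrite -triple_spread_mod e triple_spread_mod.
rewrite (divn_eq j1 t) (divn_eq j2 t) e_mod; congr (_ * _ + _).
move: e; rewrite /triple_spread e_mod; case: ifP => [_|_ ->] //.
have l_lt : j2 %% t < t by rewrite ltn_mod.
case/(block_index_inj l_lt l_lt) => + _.
by apply: triple_shift_inj => //; apply: block_lt.
Qed.

Lemma block_sum_spread tau b : tau < c -> b < m ->
  block_sum m t c label (spread_upper t) tau b =
  3 * ((m * t * c).+1 + tau * (m * t)) + t * (3 * m./2) + 3 + (t - 3)./2 * (2 * (m * t * c)).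
Proof.
move=> tau_lt b_lt; rewrite /block_sum.
rewrite (sum_ord_split3 (fun l => paired_value m t c label (spread_upper t) tau (b * t + l))) //.
congr (_ + _).
  rewrite !big_ord_recr big_ord0 /= /paired_value /spread_upper /offset_label /triple_spread.
  rewrite !modn_block ?divn_block //= /triple_shift /=; try lia.
  by have := add_shifts m_odd b_lt; lia.
under eq_bigr do rewrite addnA.
have tail_mod l : l < t - 3 -> (b * t + 3 + l) %% t = 3 + l.
  by move=> l_lt; rewrite -addnA modn_block //; lia.
apply: sum_paired_value_run => [|l l_lt|l l_lt|l l_lt]; first by rewrite oddB // t_odd.
- by rewrite /spread_upper tail_mod //; lia.
- by rewrite /offset_label !triple_spread_tail ?tail_mod ?addnS //; lia.
- apply: offset_label_lt => //; first exact: triple_spread_lt.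
  by rewrite -addnA; apply: ltn_block; lia.
Qed.

Lemma MRS_odd_t_odd_m : 3 <= m -> MRS m (m * t) t.*2 2 c.
Proof.
move=> m3; have [succ_lt succ_neq pred_lt predK succK] := cyc_succ_perm (ltnW m3).
apply: (@paired_array_MRS m t c (cyc_succ m) label (spread_upper t) (cyc_pred m)) => //.
- by move=> tau j; apply: offset_label_lt => //; exact: triple_spread_lt.
- move=> tau1 tau2 j1 j2 _ _; apply: offset_label_inj; first exact: triple_spread_lt.
  exact: triple_spread_inj.
- by move=> tau b tau_lt b_lt; rewrite !block_sum_spread ?succ_lt.
Qed.

End TripleSpread.

(** * Blocks of odd width, even number of rows *)

Definition pair_swap b := if odd b then b.-1 else b.+1.

Lemma pair_swapK : involutive pair_swap.
Proof.
move=> b; rewrite /pair_swap.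
by case: (boolP (odd b)) => b_odd; [rewrite ifN | rewrite ifT]; lia.
Qed.

Lemma pair_swap_neq b : pair_swap b != b.
Proof. by rewrite /pair_swap; case: ifP; lia. Qed.

Lemma pair_swap_lt m b : ~~ odd m -> b < m -> pair_swap b < m.
Proof. by rewrite /pair_swap; case: ifP; lia. Qed.

Lemma half_pair_swap b : (pair_swap b)./2 = b./2.
Proof. by rewrite /pair_swap; case: ifP; lia. Qed.

Lemma odd_pair_swap b : odd (pair_swap b) = ~~ odd b.
Proof. by rewrite /pair_swap; case: ifP; lia. Qed.

(* The blocks 2g and 2g + 1 form group g, and e = odd b tells the two blocks of
   a group apart.  The first three columns of group g receive six labels.  Two
   consecutive groups share twelve labels, split by the table into triples with
   equal sums (9 + 9 and 24 + 24), all in the upper half.  When the number K of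
   groups is odd, group 0 instead takes {0, 1, 2} and {3, 4, 5} with 4 in the
   lower half: (P + 1) + (P + 2) + (P + 3) = (P + 4) + (P - 4) + (P + 6). *)
Definition triple_table (H e : bool) : seq nat :=
  if H then (if e then [:: 7; 8; 9] else [:: 3; 10; 11])
  else (if e then [:: 1; 2; 6] else [:: 0; 4; 5]).

Definition triple_label K G (e : bool) l :=
  if G < odd K then 3 * e + l
  else 6 * odd K + (G - odd K)./2 * 12 + nth 0 (triple_table (odd (G - odd K)) e) l.

Definition triple_upper K G (e : bool) l := if G < odd K then ~~ e || (l != 1) else true.

Definition triple_value P K G e l :=
  if triple_upper K G e l then P.+1 + triple_label K G e l else P - triple_label K G e l.

Lemma triple_table_lt H e l : nth 0 (triple_table H e) l < 12.
Proof. by case: H; case: e; case: l => [|[|[|l]]] //=; rewrite nth_nil. Qed.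

Lemma triple_table_inj H1 H2 e1 e2 l1 l2 : l1 < 3 -> l2 < 3 ->
  nth 0 (triple_table H1 e1) l1 = nth 0 (triple_table H2 e2) l2 -> [/\ H1 = H2, e1 = e2 & l1 = l2].
Proof.
by case: l1 => [|[|[|]]] // _; case: l2 => [|[|[|]]] // _; case: H1; case: e1; case: H2; case: e2.
Qed.

Lemma triple_label_lt K G e l : G < K -> l < 3 -> triple_label K G e l < 6 * K.
Proof.
move=> G_lt l_lt; have := triple_table_lt (odd (G - odd K)) e l.
by rewrite /triple_label; case: ifP; lia.
Qed.

Lemma triple_label_inj K G1 G2 e1 e2 l1 l2 : l1 < 3 -> l2 < 3 ->
  triple_label K G1 e1 l1 = triple_label K G2 e2 l2 -> [/\ G1 = G2, e1 = e2 & l1 = l2].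
Proof.
move=> lt1 lt2; rewrite /triple_label.
set T1 := nth 0 _ l1; set T2 := nth 0 _ l2.
have T1_lt : T1 < 12 by apply: triple_table_lt.
have T2_lt : T2 < 12 by apply: triple_table_lt.
case: ifP => G1_lt; case: ifP => G2_lt; try lia.
  clear T1_lt T2_lt; rewrite {}/T1 {}/T2.
  by case: e1; case: e2 => /= e; split; try lia; exfalso; lia.
move=> e; have /(block_index_inj T1_lt T2_lt)[q_eq] :
  (G1 - odd K)./2 * 12 + T1 = (G2 - odd K)./2 * 12 + T2 by lia.
by case/triple_table_inj => // H_eq -> ->; split=> //; lia.
Qed.

Lemma triple_value_sum P K G : 5 <= P ->
  \sum_(l < 3) triple_value P K G false l = \sum_(l < 3) triple_value P K G true l.
Proof.
move=> P5; rewrite !big_ord_recr !big_ord0 /= /triple_value /triple_upper /triple_label.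
by case: (ltnP G (odd K)) => _ /=; [|case: (odd (G - odd K))] => /=; lia.
Qed.

Section SplitLabel.
Variables m t c : nat.
Hypotheses (m_even : ~~ odd m) (t3 : 3 <= t) (t_odd : odd t).

Let t_gt0 : 0 < t := leq_trans (ltn0Sn 2) t3.

Local Notation K := (c * m./2).

Definition split_label tau j :=
  if j %% t < 3 then triple_label K (tau * m./2 + (j %/ t)./2) (odd (j %/ t)) (j %% t)
  else 6 * K + (tau * m + j %/ t) * (t - 3) + (j %% t - 3).

Definition split_upper tau j :=
  if j %% t < 3 then triple_upper K (tau * m./2 + (j %/ t)./2) (odd (j %/ t)) (j %% t)
  else odd (j %% t).

Lemma split_label_size : 6 * K + c * m * (t - 3) = m * t * c.
Proof.
have [M m_eq] : exists M, m = 2 * M by exists m./2; lia.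
have [w t_eq] : exists w, t = 3 + w by exists (t - 3); lia.
have -> : m./2 = M by lia.
by rewrite m_eq t_eq addKn; nia.
Qed.

Lemma group_lt tau b : tau < c -> b < m -> tau * m./2 + b./2 < K.
Proof. by move=> tau_lt b_lt; apply: ltn_block => //; lia. Qed.

Lemma split_label_lt tau j : tau < c -> j < m * t -> split_label tau j < m * t * c.
Proof.
move=> tau_lt j_lt; have b_lt := block_lt j_lt.
rewrite /split_label -split_label_size; case: ifP => l_lt.
  by apply: leq_trans (leq_addr _ _); apply: triple_label_lt => //; apply: group_lt.
rewrite -addnA ltn_add2l; apply: ltn_block; first exact: ltn_block.
by have := ltn_pmod j t_gt0; lia.
Qed.

Lemma split_label_inj tau1 tau2 j1 j2 : tau1 < c -> tau2 < c -> j1 < m * t -> j2 < m * t ->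
  split_label tau1 j1 = split_label tau2 j2 -> tau1 = tau2 /\ j1 = j2.
Proof.
move=> tau1_lt tau2_lt j1_lt j2_lt e; have b1_lt := block_lt j1_lt; have b2_lt := block_lt j2_lt.
have l1_lt := ltn_pmod j1 t_gt0; have l2_lt := ltn_pmod j2 t_gt0.
suff [-> b_eq l_eq] : [/\ tau1 = tau2, j1 %/ t = j2 %/ t & j1 %% t = j2 %% t].
  by rewrite (divn_eq j1 t) (divn_eq j2 t) b_eq l_eq.
have small tau j : tau < c -> j < m * t -> j %% t < 3 -> split_label tau j < 6 * K.
  move=> tau_lt j_lt l_lt; rewrite /split_label l_lt.
  by apply: triple_label_lt => //; apply: group_lt => //; apply: block_lt.
move: e; rewrite /split_label; case: ifP => l1_small; case: ifP => l2_small.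
- case/triple_label_inj => // G_eq b_odd l_eq.
  have h1_lt : (j1 %/ t)./2 < m./2 by lia.
  have h2_lt : (j2 %/ t)./2 < m./2 by lia.
  by case: (block_index_inj h1_lt h2_lt G_eq) => tau_eq h_eq; split=> //; lia.
- have := small _ _ tau1_lt j1_lt l1_small; rewrite /split_label l1_small /=.
  by move=> + e; rewrite e -addnA ltnNge leq_addr.
- have := small _ _ tau2_lt j2_lt l2_small; rewrite /split_label l2_small /=.
  by move=> + e; rewrite -e -addnA ltnNge leq_addr.
have tl1 : j1 %% t - 3 < t - 3 by lia.
have tl2 : j2 %% t - 3 < t - 3 by lia.
move=> e; have {e} : (tau1 * m + j1 %/ t) * (t - 3) + (j1 %% t - 3) =
    (tau2 * m + j2 %/ t) * (t - 3) + (j2 %% t - 3).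
  by apply/eqP; rewrite -(eqn_add2l (6 * K)) !addnA e.
case/(block_index_inj tl1 tl2) => /(block_index_inj b1_lt b2_lt)[-> ->] ?.
by split=> //; lia.
Qed.

Lemma block_sum_split tau b : tau < c -> b < m ->
  block_sum m t c split_label split_upper tau b =
  \sum_(l < 3) triple_value (m * t * c) K (tau * m./2 + b./2) (odd b) l
  + (t - 3)./2 * (2 * (m * t * c)).
Proof.
move=> tau_lt b_lt; rewrite /block_sum.
rewrite (sum_ord_split3 (fun l => paired_value m t c split_label split_upper tau (b * t + l))) //.
congr (_ + _).
  apply: eq_bigr => l _; have l_lt : l < t by apply: leq_trans t3.
  by rewrite /paired_value /split_label /split_upper modn_block ?divn_block ?ltn_ord.
under eq_bigr do rewrite addnA.
have tail_mod l : l < t - 3 -> (b * t + 3 + l) %% t = 3 + l.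
  by move=> l_lt; rewrite -addnA modn_block //; lia.
have tail_div l : l < t - 3 -> (b * t + 3 + l) %/ t = b.
  by move=> l_lt; rewrite -addnA divn_block //; lia.
have tail_big l : (3 + l < 3) = false by rewrite ltnNge leq_addr.
apply: sum_paired_value_run => [|l l_lt|l l_lt|l l_lt]; first by rewrite oddB // t_odd.
- by rewrite /split_upper tail_mod // tail_big; lia.
- by rewrite /split_label !tail_mod ?tail_div ?tail_big //; lia.
- by apply: split_label_lt => //; rewrite -addnA; apply: ltn_block; lia.
Qed.

Lemma MRS_odd_t_even_m : MRS m (m * t) t.*2 2 c.
Proof.
apply: (@paired_array_MRS m t c pair_swap split_label split_upper pair_swap) => //.
- by move=> b; apply: pair_swap_lt.
- by move=> b _; apply: pair_swap_neq.
- by move=> b; apply: pair_swap_lt.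
- by move=> b _; apply: pair_swapK.
- by move=> b _; apply: pair_swapK.
- by move=> tau j; apply: split_label_lt.
- by move=> tau1 tau2 j1 j2; apply: split_label_inj.
move=> tau b tau_lt b_lt.
have P5 : 5 <= m * t * c.
  have m2 : 2 <= m by move: b_lt m_even; lia.
  by apply: ltnW (leq_mul (leq_mul m2 t3) (leq_ltn_trans (leq0n tau) tau_lt)).
rewrite !block_sum_split ?pair_swap_lt // half_pair_swap odd_pair_swap.
by case: (odd b); rewrite /= ?triple_value_sum.
Qed.

End SplitLabel.

Theorem mainTheorem5 (m n s c : nat) :
  0 < m -> 0 < n -> 0 < c -> 2 <= s <= n -> m * s = 2 * n ->
  (MRS m n s 2 c <-> (4 <= s /\ ~~ odd s)).
Proof.
move=> m_gt0 n_gt0 c_gt0 /andP[s2 s_le] ems; split; first exact: MRS_k2_necessary.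
case=> s4 s_even; set t := s./2.
have s_eq : s = t.*2 by rewrite -[s in LHS]odd_double_half (negbTE s_even).
have n_eq : n = m * t by lia.
have m2 : 2 <= m by move: s_le; rewrite s_eq n_eq -mul2n leq_pmul2r; lia.
rewrite s_eq n_eq; case: (boolP (odd t)) => t_odd; last by apply: MRS_even_t; lia.
have t3 : 3 <= t by lia.
case: (boolP (odd m)) => m_odd; last exact: MRS_odd_t_even_m.
by apply: MRS_odd_t_odd_m => //; lia.
Qed.
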